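(* Let $G_1$ and $G_2$ be graphs on $n$ nodes with Laplacian matrices $Q_1,Q_2$, and for $p\ge0$ let $$Q(p)=\begin{bmatrix} Q_1+pnI & -pJ\\ -pJ & Q_2+pnI\end{bmatrix},$$ where $J$ is the $n\times n$ all-one matrix (an $n$-to-$n$ interconnection), with eigenvalues $0=\mu_N(p)\le\mu_{N-1}(p)\le\dots\le\mu_1(p)$, $N=2n$. Define $p^*=\sup\big(\{0\}\cup\{p>0:\ \mu_{N-1}(p)=2np\}\big)$. Then $$p^*=\min\left\{\frac{\mu_{n-1}(Q_1)}{n},\ \frac{\mu_{n-1}(Q_2)}{n}\right\},$$ where $\mu_{n-1}(Q_i)$ is the second smallest eigenvalue of $Q_i$.
   Context: $2np$ is an eigenvalue of $Q(p)$ with eigenvector $[u^T,-u^T]^T$, $u$ the all-one vector; $p^*$ is the structural transition threshold, described in the paper as the coupling beyond which the algebraic connectivity $\mu_{N-1}$ no longer equals $2np$ (formalized here as the supremum). *)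

From HB Require Import structures.
From mathcomp Require Import all_boot all_order all_algebra.
From mathcomp Require Import classical_sets reals.
Set Implicit Arguments. Unset Strict Implicit. Unset Printing Implicit Defensive.
Import Order.TTheory GRing.Theory Num.Theory.
Local Open Scope ring_scope.
Local Open Scope classical_set_scope.

Definition simple_graph (n : nat) (e : rel 'I_n) : Prop :=
  symmetric e /\ irreflexive e.

Definition laplacian (R : realType) (n : nat) (e : rel 'I_n) : 'M[R]_n :=
  \matrix_(i, j) (if i == j then (#|[set k | e i k]|)%:R
                  else if e i j then -1 else 0).

(* For real
   symmetric matrices such a list exists and is unique up to permutation. *)
Definition eigvals (R : realType) (n : nat) (A : 'M[R]_n) : seq R :=
  sort <=%R (xget [::] [set s : seq R | char_poly A = \prod_(x <- s) ('X - x%:P)]).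

(* Second smallest eigenvalue (mu_{n-1} in the paper's decreasing indexing). *)
Definition second_smallest_eig (R : realType) (n : nat) (A : 'M[R]_n) : R :=
  nth 0 (eigvals A) 1.

Definition coupled_laplacian (R : realType) (n : nat) (Q1 Q2 : 'M[R]_n) (p : R)
  : 'M[R]_(n + n) :=
  block_mx (Q1 + (p * n%:R)%:M) (const_mx (- p))
           (const_mx (- p)) (Q2 + (p * n%:R)%:M).

Definition transition_threshold (R : realType) (n : nat) (Q1 Q2 : 'M[R]_n) : R :=
  sup ([set 0] `|` [set p : R | 0 < p /\
         second_smallest_eig (coupled_laplacian Q1 Q2 p) = 2 * n%:R * p]).

From HB Require Import structures.
From mathcomp Require Import all_boot all_order all_algebra.
From mathcomp Require Import boolp classical_sets reals.
From mathcomp Require Import complex sesquilinear spectral.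
From mathcomp Require Import ring lra.
Import Order.TTheory GRing.Theory Num.Theory.
Local Open Scope ring_scope.

(* With u the all-ones vector, Q(p) maps [u; u] to 0 and [u; -u] to 2np [u; -u],
   and on the vectors [x; 0], [0; y] with x, y orthogonal to u it acts as
   Q_1 + pn and Q_2 + pn.  Hence the spectrum of Q(p) consists of 0, 2np and the
   eigenvalues mu + pn, where mu runs over the spectra of Q_1 and Q_2 with one
   zero removed from each; as these mu are nonnegative, mu_{N-1}(p) = 2np exactly
   when pn <= mu_{n-1}(Q_1) and pn <= mu_{n-1}(Q_2), so the set defining p^* is
   {0} together with (0, min_i mu_{n-1}(Q_i) / n].
   The spectrum is read off the characteristic polynomial: eliminating the
   off-diagonal blocks gives, for t <> pn,
     (t - pn)^2 det(t - Q(p)) = t (t - 2np) det(t - pn - Q_1) det(t - pn - Q_2). *)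

Section SortedLists.

Context {d : Order.disp_t} {T : orderType d}.
Implicit Types (x y a : T) (s : seq T).
Local Open Scope order_scope.

Lemma sorted_head_le {x s} : sorted <=%O (x :: s) -> {in x :: s, forall y, x <= y}.
Proof.
move=> /(order_path_min le_trans) /allP x_le y; rewrite in_cons.
by case/orP => [/eqP ->|/x_le].
Qed.

Lemma all_le_sorted {x s} a :
  sorted <=%O (x :: s) -> all (<=%O a) (x :: s) = (a <= x).
Proof.
move=> sorted_xs; rewrite /=; case: (boolP (a <= x)) => //= ax.
apply/allP => y ys; apply: le_trans ax _.
by apply: (sorted_head_le sorted_xs); rewrite in_cons ys orbT.
Qed.

Lemma sort_cons_le x s : all (<=%O x) s -> sort <=%O (x :: s) = x :: sort <=%O s.
Proof.
move=> x_le; apply: (sorted_eq le_trans le_anti).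
- exact: sort_sorted (@le_total _ T) _.
- rewrite /= path_sortedE; last exact: le_trans.
  by rewrite all_sort x_le (sort_sorted (@le_total _ T)).
- by rewrite perm_sort perm_cons perm_sym perm_sort.
Qed.

Lemma nth_sort0_eq x0 a s :
  a \in s -> nth x0 (sort <=%O s) 0 = a <-> all (<=%O a) s.
Proof.
rewrite -(perm_all _ (permEl (perm_sort <=%O s))) -(mem_sort <=%O).
have := sort_sorted (@le_total _ T) s.
case: (sort <=%O s) => [//|y w] sorted_yw a_in.
rewrite (all_le_sorted a sorted_yw) /=; split => [<-|ay]; first exact: lexx.
by apply/le_anti; rewrite ay (sorted_head_le sorted_yw).
Qed.

End SortedLists.

Lemma horner_char_poly (R : comNzRingType) n (A : 'M[R]_n) a :
  (char_poly A).[a] = \det (a%:M - A).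
Proof.
rewrite /char_poly -horner_evalE -det_map_mx; congr (\det _).
apply/matrixP => i j; rewrite !mxE /horner_eval.
by rewrite rmorphB rmorphMn /= !horner_evalE hornerX hornerC.
Qed.

Lemma poly_eq_except (R : numDomainType) (P Q : {poly R}) c :
  (forall t, t != c -> P.[t] = Q.[t]) -> P = Q.
Proof.
move=> PQ; apply/eqP; rewrite -subr_eq0; apply/negPn/negP => PQ0.
pose rs := [seq c + i.+1%:R | i <- iota 0 (size (P - Q))].
suff : (size rs < size (P - Q)%R)%N by rewrite size_map size_iota ltnn.
apply: max_poly_roots => //.
  apply/allP => _ /mapP [i _ ->]; rewrite /root hornerD hornerN PQ ?subrr //.
  by rewrite -subr_eq0 addrC addKr pnatr_eq0.
by rewrite map_inj_uniq ?iota_uniq // => i j /addrI /eqP; rewrite eqr_nat => /eqP [].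
Qed.

Lemma char_poly_conj (F : numFieldType) n (P A : 'M[F]_n) : P \in unitmx ->
  char_poly (invmx P *m A *m P) = char_poly A.
Proof.
move=> Pu; apply: (@poly_eq_except _ _ _ 0) => z _; rewrite !horner_char_poly.
have -> : z%:M - invmx P *m A *m P = invmx P *m (z%:M - A) *m P.
  by rewrite mulmxBr mulmxBl mul_mx_scalar -scalemxAl mulVmx // scalemx1.
by rewrite !det_mulmx mulrC mulrA -det_mulmx mulmxV // det1 mul1r.
Qed.

Lemma char_poly_sym_split {R : rcfType} {n} {A : 'M[R]_n} : A^T = A ->
  exists s : seq R, char_poly A = \prod_(x <- s) ('X - x%:P).
Proof.
move=> symA; pose Ac := map_mx (real_complex R) A.
have Ac_herm : Ac \is hermsymmx.
  apply: realsym_hermsym.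
    apply/is_hermitianmxP; rewrite expr0 scale1r; apply/matrixP => i j.
    by rewrite !mxE -[in LHS]symA mxE.
  by apply/mxOverP => i j; rewrite mxE; apply/complex_realP; eexists.
have /orthomx_spectralP AcE := hermitian_normalmx Ac_herm.
have d_real := hermitian_spectral_diag_real Ac_herm.
set d := spectral_diag Ac in AcE d_real.
exists [seq complex.Re (d 0 i) | i <- enum 'I_n].
apply: (@map_poly_inj _ _ (real_complex R)).
rewrite map_char_poly -/Ac AcE char_poly_conj ?spectral_unit //.
rewrite char_poly_trig ?diag_mx_is_trig // rmorph_prod big_map big_enum /=.
apply: eq_bigr => i _; rewrite map_polyXsubC /= mxE eqxx mulr1n.
by rewrite RRe_real //; apply: (mxOverP d_real).
Qed.

Lemma det_id_add_rank1 (R : comNzRingType) n (u : 'cV[R]_n) (v : 'rV[R]_n) :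
  \det (1%:M + u *m v) = 1 + (v *m u) 0 0.
Proof.
have E1 : block_mx (1%:M + u *m v) u 0 1%:M *m block_mx 1%:M 0 (-v) 1%:M
          = block_mx 1%:M u (-v) (1%:M : 'M_1).
  by rewrite mulmx_block !mulmx1 !mul0mx !mulmx0 !mul1mx !add0r mulmxN addrK.
have E2 : block_mx 1%:M 0 (-v) 1%:M *m block_mx 1%:M u 0 (1%:M + v *m u)
          = block_mx 1%:M u (-v) (1%:M : 'M_1).
  by rewrite mulmx_block !mulmx1 !mul0mx !mulmx0 !mul1mx !addr0 mulNmx addrCA addNr addr0.
have := congr1 determinant (etrans E1 (esym E2)).
rewrite !det_mulmx det_ublock det_lblock det_ublock !det1 !mulr1 mul1r.
by rewrite det_mx11 !mxE mul1r eqxx => ->.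
Qed.

Lemma det_scalar_sub_const (F : fieldType) n (s k : F) : s != 0 ->
  \det (s%:M - const_mx k : 'M_n) = s ^+ n * (1 - k *+ n / s).
Proof.
move=> s0.
have -> : s%:M - const_mx k =
    s *: (1%:M + const_mx (- (k / s)) *m (const_mx 1 : 'rV_n)) :> 'M[F]_n.
  apply/matrixP => i j; rewrite !mxE big_ord1 !mxE.
  by case: eqP => _; rewrite ?mulr1n ?mulr0n; field.
rewrite detZ det_id_add_rank1 !mxE (eq_bigr (fun=> - (k / s))) => [|j _].
  by rewrite sumr_const card_ord mulNrn -mulrnAl.
by rewrite !mxE mul1r.
Qed.

Lemma det_block_const_offdiag (F : fieldType) n (D1 D2 : 'M[F]_n) (s a : F) :
  s != 0 -> D1 *m const_mx 1 = const_mx s :> 'M_n ->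
  D2 *m const_mx 1 = const_mx s :> 'M_n ->
  s ^+ 2 * \det (block_mx D1 (const_mx a) (const_mx a) D2)
  = (s ^+ 2 - (a *+ n) ^+ 2) * \det D1 * \det D2.
Proof.
move=> s0 D1J D2J.
have mulJ (D : 'M[F]_n) b : D *m const_mx 1 = const_mx s :> 'M_n ->
    D *m const_mx b = const_mx (s * b) :> 'M_n.
  move=> DJ; have -> : const_mx b = b *: const_mx 1 :> 'M_n.
    by apply/matrixP => i j; rewrite !mxE mulr1.
  by rewrite -scalemxAr DJ; apply/matrixP => i j; rewrite !mxE mulrC.
have constJ b c : const_mx b *m (const_mx c : 'M_n) = const_mx (b * c *+ n) :> 'M[F]_n.
  apply/matrixP => i j; rewrite !mxE.
  under eq_bigr do rewrite !mxE.
  by rewrite sumr_const card_ord.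
have scalJ b : const_mx b *m s%:M = const_mx (b * s) :> 'M[F]_n.
  by rewrite mul_mx_scalar; apply/matrixP => i j; rewrite !mxE mulrC.
(* Right multiplication by [s, -a J; 0, s] clears the upper-right block; the
   lower-right one, s D2 - a^2 n J, factors as D2 (s - k J) because D2 J = s J. *)
set k := a ^+ 2 *+ n / s.
have E : block_mx D1 (const_mx a) (const_mx a) D2 *m block_mx s%:M (const_mx (- a)) 0 s%:M
       = block_mx (s *: D1) 0 (const_mx (a * s)) (D2 *m (s%:M - const_mx k)).
  rewrite mulmx_block !mulmx0 !addr0 mul_mx_scalar mulJ // constJ scalJ mulmxBr.
  rewrite mulJ // mul_mx_scalar; congr block_mx; apply/matrixP => i j; rewrite !mxE.
    ring.
  by rewrite /k; field.
have := congr1 determinant E.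
rewrite det_mulmx det_lblock det_ublock det_mulmx !det_scalar detZ.
rewrite det_scalar_sub_const // /k => HE.
have sn0 : s ^+ n * s ^+ n != 0 by rewrite mulf_neq0 // expf_neq0.
by apply: (mulIf sn0); rewrite -(mulrA (s ^+ 2)) HE; field.
Qed.

Lemma eigvals_char_poly {R : realType} {n} {A : 'M[R]_n} {s : seq R} :
  char_poly A = \prod_(x <- s) ('X - x%:P) -> eigvals A = sort <=%R s.
Proof.
move=> splitA; rewrite /eigvals; set S := [set _ | _]%classic.
have : S (xget [::] S) by apply: xgetPex; exists s.
rewrite /S /= splitA => /prod_XsubC_eq ss'.
apply/perm_sortP; [exact: le_total | exact: le_trans | exact: le_anti |].
by rewrite perm_sym.
Qed.

Lemma eigvals_sorted {R : realType} {n} (A : 'M[R]_n) : sorted <=%R (eigvals A).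
Proof. exact: (sort_sorted (@le_total _ R)). Qed.

Section Laplacian.

Context (R : realType) {n : nat} {e : rel 'I_n}.
Hypothesis he : simple_graph e.
Local Notation L := (laplacian R e).

Definition adjacency_mx : 'M[R]_n := \matrix_(i, j) (e i j)%:R.
Definition degree_row : 'rV[R]_n := \row_i \sum_k (e i k)%:R.

Lemma laplacianE : L = diag_mx degree_row - adjacency_mx.
Proof.
have [_ irr] := he; apply/matrixP => i j; rewrite !mxE.
have -> : (#|[set k | e i k]%classic|)%:R = \sum_k (e i k)%:R :> R.
  rewrite -natr_sum; congr _%:R; rewrite -sum1_card big_mkcond; apply: eq_bigr => k _.
  rewrite (_ : k \in _ = e i k); first by case: (e i k).
  by apply/idP/idP => [/set_mem|/mem_set].
case: eqP => [<-|_]; first by rewrite irr subr0.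
by case: (e i j); rewrite sub0r ?oppr0.
Qed.

Lemma laplacian_tr : L^T = L.
Proof.
have [sym _] := he.
rewrite laplacianE linearB /= tr_diag_mx; congr (_ - _).
by apply/matrixP => i j; rewrite !mxE sym.
Qed.

Lemma laplacian_mul_const1 m : L *m (const_mx 1 : 'M_(n, m)) = 0.
Proof.
rewrite laplacianE mulmxBl mul_diag_mx; apply/eqP; rewrite subr_eq0; apply/eqP.
by apply/matrixP => i j; rewrite !mxE mulr1; apply: eq_bigr => k _; rewrite !mxE mulr1.
Qed.

Lemma laplacian_root0 : (0 < n)%N -> root (char_poly L) 0.
Proof.
move=> n_gt0; rewrite -eigenvalue_root_char; apply/eigenvalueP.
exists (const_mx 1); last first.
  by apply/eqP => /matrixP /(_ 0 (Ordinal n_gt0)) /eqP; rewrite !mxE oner_eq0.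
rewrite scale0r -[L]laplacian_tr -trmx_const -trmx_mul.
by rewrite laplacian_mul_const1 trmx0.
Qed.

(* Gershgorin's bound |d - x| <= d at a coordinate where the eigenvector is largest. *)
Lemma laplacian_eig_ge0 x : root (char_poly L) x -> 0 <= x.
Proof.
rewrite -eigenvalue_root_char => /eigenvalueP [v vL v0].
have [k vk] : exists k, v 0 k != 0.
  apply/existsP; apply: contraNT v0 => /existsPn v0.
  by apply/eqP/matrixP => i j; rewrite ord1 !mxE; apply/eqP/negPn.
have [j _ vj_max] := @Order.TotalTheory.arg_maxP _ _ _ k xpredT (fun j => `|v 0 j|) isT.
have vj_gt0 : 0 < `|v 0 j| by apply: lt_le_trans (vj_max k isT); rewrite normr_gt0.
set d := \sum_i (e j i)%:R : R.
have nbr_sum : \sum_i v 0 i * (e i j)%:R = (d - x) * v 0 j.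
  move: vL; rewrite laplacianE mulmxBr mul_mx_diag => /matrixP /(_ 0 j).
  rewrite !mxE; under [X in _ - X = _]eq_bigr do rewrite mxE.
  by move=> vLj; rewrite mulrBl -vLj /d; ring.
have : `|d - x| * `|v 0 j| <= d * `|v 0 j|.
  rewrite -normrM -nbr_sum; apply: le_trans (ler_norm_sum _ _ _) _.
  rewrite /d mulr_suml; apply: ler_sum => i _.
  have [sym _] := he.
  rewrite normrM (ger0_norm (ler0n _ _)) (sym i j) mulrC.
  by apply: ler_wpM2l; [exact: ler0n | exact: vj_max].
rewrite ler_pM2r // => /(le_trans (ler_norm (d - x))); lra.
Qed.

End Laplacian.

Lemma eigvals_laplacian (R : realType) {n} {e : rel 'I_n} :
  simple_graph e -> (2 <= n)%N ->
  exists m r, eigvals (laplacian R e) = [:: 0, m & r] /\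
    char_poly (laplacian R e) = \prod_(x <- [:: 0, m & r]) ('X - x%:P).
Proof.
move=> he n_ge2; set L := laplacian R e.
have [s chiL] := char_poly_sym_split (laplacian_tr R he).
have chiE : char_poly L = \prod_(x <- eigvals L) ('X - x%:P).
  by rewrite (eigvals_char_poly chiL) chiL; apply: perm_big; rewrite perm_sym perm_sort.
have sorted_eig := eigvals_sorted L.
have size_eig : size (eigvals L) = n.
  by have := size_char_poly L; rewrite chiE size_prod_XsubC => -[].
have eig0 : 0 \in eigvals L.
  by rewrite -root_prod_XsubC -chiE (laplacian_root0 R he) // (leq_trans _ n_ge2).
have [x [m [r eigE]]] : exists x m r, eigvals L = [:: x, m & r].
  have : (1 < size (eigvals L))%N by rewrite size_eig.
  by case: (eigvals L) => [|x [|m r]] // _; exists x, m, r.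
rewrite eigE in sorted_eig eig0 chiE *; exists m, r.
have x_ge0 : 0 <= x.
  by apply: (laplacian_eig_ge0 R he); rewrite chiE root_prod_XsubC mem_head.
suff x0 : x = 0 by rewrite -x0.
by apply/le_anti/andP; split => //; exact: (sorted_head_le sorted_eig _ eig0).
Qed.

Lemma char_poly_coupled {R : realType} {n} {Q1 Q2 : 'M[R]_n} (p : R) {r1 r2 : seq R} :
  Q1 *m const_mx 1 = 0 :> 'M_n -> Q2 *m const_mx 1 = 0 :> 'M_n ->
  char_poly Q1 = \prod_(x <- 0 :: r1) ('X - x%:P) ->
  char_poly Q2 = \prod_(x <- 0 :: r2) ('X - x%:P) ->
  char_poly (coupled_laplacian Q1 Q2 p) =
  \prod_(x <- [:: 0, 2 * (p * n%:R) & [seq x + p * n%:R | x <- r1 ++ r2]])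
    ('X - x%:P).
Proof.
move=> Q1J Q2J chi1 chi2; set c := p * n%:R.
apply: (@poly_eq_except _ _ _ c) => t tc.
have s_neq0 : t - c != 0 by rewrite subr_eq0.
have shiftJ (Q : 'M[R]_n) : Q *m const_mx 1 = 0 :> 'M_n ->
    ((t - c)%:M - Q) *m const_mx 1 = const_mx (t - c) :> 'M_n.
  move=> QJ; rewrite mulmxBl QJ subr0 mul_scalar_mx.
  by apply/matrixP => i j; rewrite !mxE mulr1.
have blockE : t%:M - coupled_laplacian Q1 Q2 p =
    block_mx ((t - c)%:M - Q1) (const_mx p) (const_mx p) ((t - c)%:M - Q2).
  rewrite /coupled_laplacian scalar_mx_block opp_block_mx add_block_mx.
  by congr block_mx; apply/matrixP => i j; rewrite !mxE /c;
    try (case: eqP => _; rewrite ?mulr1n ?mulr0n); ring.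
apply: (mulfI (expf_neq0 2 s_neq0)).
rewrite horner_char_poly blockE det_block_const_offdiag ?shiftJ //.
rewrite -!horner_char_poly chi1 chi2 !horner_prod !big_cons big_map big_cat /=.
have shift_prod r : \prod_(x <- r) ('X - (x + c)%:P).[t] =
                    \prod_(x <- r) ('X - x%:P).[t - c].
  by apply: eq_bigr => x _; rewrite !hornerXsubC; ring.
by rewrite !hornerXsubC !shift_prod /c -mulr_natr; ring.
Qed.

Lemma coupled_spectrum_second_iff (R : realDomainType) (c m1 m2 : R) (r1 r2 : seq R) :
  0 < c -> sorted <=%R [:: 0, m1 & r1] -> sorted <=%R [:: 0, m2 & r2] ->
  nth 0 (sort <=%R [:: 0, 2 * c & [seq x + c | x <- (m1 :: r1) ++ (m2 :: r2)]]) 1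
    = 2 * c <-> c <= m1 /\ c <= m2.
Proof.
move=> c_gt0 sorted1 sorted2; set S := map _ _; set T := 2 * c :: S.
have /allP ge0_1 := order_path_min le_trans sorted1.
have /allP ge0_2 := order_path_min le_trans sorted2.
have T_ge0 : all (<=%R 0) T.
  apply/allP => y; rewrite in_cons => /orP [/eqP -> | /mapP [x]].
    by rewrite mulr_ge0 ?ltW.
  by rewrite mem_cat => /orP [/ge0_1 | /ge0_2] x_ge0 ->; rewrite addr_ge0 // ltW.
have shift_le l : all (<=%R (2 * c)) [seq x + c | x <- l] = all (<=%R c) l.
  by rewrite all_map; apply: eq_all => x; rewrite /= -lerBlDr; congr (_ <= _); ring.
rewrite sort_cons_le // [nth _ _ _]/= nth_sort0_eq ?mem_head //.
rewrite (_ : all _ T = (2 * c <= 2 * c) && all (<=%R (2 * c)) S) // lexx shift_le.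
rewrite all_cat !all_le_sorted ?(path_sorted sorted1) ?(path_sorted sorted2) //.
by split => [/and3P [] | [-> ->]].
Qed.

Lemma sup_zero_setU_itv {R : realType} {M : R} :
  0 <= M -> sup ([set 0] `|` [set p | 0 < p /\ p <= M]) = M.
Proof.
move=> M_ge0; set S := (_ `|` _)%classic.
have S_ub : ubound S M by move=> x [-> | []].
have SM : S M.
  have [-> | M_neq0] := eqVneq M 0; first by left.
  by right; split; rewrite // lt_neqAle eq_sym M_neq0.
apply/le_anti/andP; split; first by apply: ge_sup => //; exists 0; left.
by apply: sup_upper_bound => //; split; [exists M | exists M].
Qed.

Theorem mainTheorem4 (R : realType) (n : nat) (e1 e2 : rel 'I_n)
  (hn : (2 <= n)%N) (he1 : simple_graph e1) (he2 : simple_graph e2) :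
  transition_threshold (laplacian R e1) (laplacian R e2) =
  Num.min (second_smallest_eig (laplacian R e1) / n%:R)
          (second_smallest_eig (laplacian R e2) / n%:R).
Proof.
have n_gt0 : 0 < n%:R :> R by rewrite ltr0n (leq_trans _ hn).
have [m1 [r1 [eig1 chi1]]] := eigvals_laplacian R he1 hn.
have [m2 [r2 [eig2 chi2]]] := eigvals_laplacian R he2 hn.
have sorted1 : sorted <=%R [:: 0, m1 & r1] by rewrite -eig1 eigvals_sorted.
have sorted2 : sorted <=%R [:: 0, m2 & r2] by rewrite -eig2 eigvals_sorted.
rewrite /second_smallest_eig eig1 eig2 /=; set M := Num.min _ _.
have coupled_iff p : 0 < p ->
    second_smallest_eig (coupled_laplacian (laplacian R e1) (laplacian R e2) p)
      = 2 * n%:R * p <-> p <= M.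
  move=> p_gt0; rewrite /second_smallest_eig.
  rewrite (eigvals_char_poly (char_poly_coupled p _ _ chi1 chi2)) ?laplacian_mul_const1 //.
  rewrite [2 * _ * p]mulrAC -mulrA coupled_spectrum_second_iff ?mulr_gt0 //.
  by rewrite /M le_min !ler_pdivlMr //; split => [[-> ->] | /andP].
have M_ge0 : 0 <= M.
  case/andP: sorted1 => m1_ge0 _; case/andP: sorted2 => m2_ge0 _.
  by rewrite le_min !divr_ge0.
rewrite /transition_threshold -[RHS](sup_zero_setU_itv M_ge0); congr (sup (_ `|` _)).
apply/funext => p; apply/propext.
by split => -[p_gt0 /(coupled_iff p p_gt0) p_le]; split.
Qed.
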